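(* Let $\bar\eta>0$ be a constant such that $\eta^{(l)}_e(t)\le\bar\eta$ for all $e,t,l$ at every optimizer of the reformulated problem, and consider problem (P4') built with this $\bar\eta$. Then there exists a scalar $\bar\vartheta$ such that $|\vartheta^{(l)}_e(t)|\le\bar\vartheta$ for all $e\in\mathcal E$, $t\in\mathcal T$, $l\in\mathcal L$ (at every feasible point of (P4')).
   Context: Data: integers $n,T,N\ge1$, $\mathcal E=\{1,\dots,n\}$, $\mathcal T=\{0,\dots,T-1\}$, $\mathcal L=\{1,\dots,N\}$, $\mathcal O=\{1,\dots,m\}$; speed-limit values $0<\gamma^{(1)}<\dots<\gamma^{(m)}$; for each $e$: $h_e>0$, $\bar\rho_e>0$, $\bar f_e>0$, $\bar u_e>0$ with $\bar u_e\bar\rho_e>\bar f_e$, $\tau_e=\bar f_e/(\bar u_e\bar\rho_e-\bar f_e)$; constants $\bar\eta>0$, $\epsilon(\beta)>0$; sample data $\omega^{(l)}(t)\ge0$, $\rho^{(l)}_e(0)\ge0$, $\kappa^{(l)}_e(t)=\frac{1-r^{o,(l)}_{e-1}(t)}{1-r^{in,(l)}_e(t)}$ with $r^{o,(l)},r^{in,(l)}\in[0,1)$. Problem (P4'): maximize $-\lambda\epsilon(\beta)-\frac1N\sum_{e,t,l}\bar f_e\bar\rho_e\eta^{(l)}_e(t)+\frac1N\sum_{e,t,l}(\vartheta^{(l)}_e(t))^2$ over $x_{e,i}(t),y^{(l)}_{e,i}(t),z^{(l)}_{e,i}(t),\rho^{(l)}_e(t),\lambda,\mu^{(l)}_e(t),\nu^{(l)}_e(t),\eta^{(l)}_e(t),\vartheta^{(l)}_e(t)$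 subject to, for all $e,i,t,l$: $(\vartheta^{(l)}_e(t))^2\le\nu^{(l)}_e(t)\rho^{(l)}_e(t)$; $x_{e,i}(t)\in\{0,1\}$, $\sum_ix_{e,i}(t)=1$, $\gamma^{(1)}\le\sum_i\gamma^{(i)}x_{e,i}(t)\le\gamma^{(m)}$; $0\le z^{(l)}_{e,i}(t)\le\bar\eta x_{e,i}(t)$, $\eta^{(l)}_e(t)-\bar\eta(1-x_{e,i}(t))\le z^{(l)}_{e,i}(t)\le\eta^{(l)}_e(t)$, $0\le y^{(l)}_{e,i}(t)\le\bar\rho_ex_{e,i}(t)$, $\rho^{(l)}_e(t)-\bar\rho_e(1-x_{e,i}(t))\le y^{(l)}_{e,i}(t)\le\rho^{(l)}_e(t)$; $\rho^{(l)}_1(t+1)=\rho^{(l)}_1(t)+h_1\omega^{(l)}(t)-h_1\sum_i\gamma^{(i)}y^{(l)}_{1,i}(t)$; for $e\ge2$: $\rho^{(l)}_e(t+1)=\rho^{(l)}_e(t)+h_e\kappa^{(l)}_e(t)\sum_i\gamma^{(i)}y^{(l)}_{e-1,i}(t)-h_e\sum_i\gamma^{(i)}y^{(l)}_{e,i}(t)$ and $\kappa^{(l)}_e(t)\sum_i\gamma^{(i)}y^{(l)}_{e-1,i}(t)\le\min\{\bar f_e,\tau_e\bar u_e(\bar\rho_e-\rho^{(l)}_e(t))\}$; $\rho^{(l)}_e(0)$ equal to the sample data; $\sum_i\gamma^{(i)}(\bar\rho_e-\bar f_e/\bar u_e)z^{(l)}_{e,i}(t)-\mu^{(l)}_e(t)+\bar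 f_e\eta^{(l)}_e(t)\ge0$; $\nu^{(l)}_e(t)=\mu^{(l)}_e(t)+\frac1T\sum_i\gamma^{(i)}x_{e,i}(t)$; $\max_{e,t}|\nu^{(l)}_e(t)|\le\lambda$; $0\le\eta^{(l)}_e(t)\le\bar\eta$. *)

From HB Require Import structures.
From mathcomp Require Import all_boot all_order all_algebra.
Set Implicit Arguments. Unset Strict Implicit. Unset Printing Implicit Defensive.
Import Order.TTheory GRing.Theory Num.Theory.
Local Open Scope ring_scope.

(* Index conventions (all nat):
   links e in {1..n}, time t in {0..T-1}, samples l in {1..N},
   speed-limit options i in {1..m}. *)

Record P4data (R : realFieldType) := P4Data {
  nE : nat;
  nT : nat;
  nL : nat;
  nO : nat;
  gam : nat -> R;
  hh : nat -> R;
  rhob : nat -> R;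
  fb : nat -> R;
  ub : nat -> R;
  etab : R;
  epsb : R;
  omg : nat -> nat -> R;          (* omega^(l)(t) : omg l t *)
  rho0 : nat -> nat -> R;         (* rho^(l)_e(0) : rho0 l e *)
  rout : nat -> nat -> nat -> R;  (* r^{o,(l)}_e(t) : rout l e t *)
  rin : nat -> nat -> nat -> R    (* r^{in,(l)}_e(t) : rin l e t *)
}.

Definition tau (R : realFieldType) (D : P4data R) (e : nat) : R :=
  fb D e / (ub D e * rhob D e - fb D e).

Definition kappa (R : realFieldType) (D : P4data R) (l e t : nat) : R :=
  (1 - rout D l e.-1 t) / (1 - rin D l e t).

Definition data_ok (R : realFieldType) (D : P4data R) : Prop :=
  ((1 <= nE D)%N /\ (1 <= nT D)%N /\ (1 <= nL D)%N /\ (1 <= nO D)%N) /\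
  (0 < gam D 1 /\ (forall i, (1 <= i)%N -> (i < nO D)%N -> gam D i < gam D i.+1)) /\
  (forall e, (1 <= e <= nE D)%N ->
      [/\ 0 < hh D e, 0 < rhob D e, 0 < fb D e, 0 < ub D e &
          ub D e * rhob D e > fb D e]) /\
  (0 < etab D /\ 0 < epsb D) /\
  [/\ (forall l t, (1 <= l <= nL D)%N -> (t < nT D)%N -> 0 <= omg D l t),
       (forall l e, (1 <= l <= nL D)%N -> (1 <= e <= nE D)%N -> 0 <= rho0 D l e) &
       (forall l e t, (1 <= l <= nL D)%N -> (e <= nE D)%N -> (t < nT D)%N ->
          (0 <= rout D l e t < 1) /\ (0 <= rin D l e t < 1))].

Record P4vars (R : realFieldType) := P4Vars {
  vx : nat -> nat -> nat -> R;            (* x_{e,i}(t) : vx e i t *)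
  vy : nat -> nat -> nat -> nat -> R;     (* y^(l)_{e,i}(t) : vy l e i t *)
  vz : nat -> nat -> nat -> nat -> R;     (* z^(l)_{e,i}(t) : vz l e i t *)
  vrho : nat -> nat -> nat -> R;          (* rho^(l)_e(t) : vrho l e t *)
  vlam : R;
  vmu : nat -> nat -> nat -> R;
  vnu : nat -> nat -> nat -> R;
  veta : nat -> nat -> nat -> R;
  vth : nat -> nat -> nat -> R
}.

Definition sumO (R : realFieldType) (D : P4data R) (F : nat -> R) : R :=
  \sum_(1 <= i < (nO D).+1) F i.

Definition feasible_P4 (R : realFieldType) (D : P4data R) (V : P4vars R) : Prop :=
  (forall e t, (1 <= e <= nE D)%N -> (t < nT D)%N ->
     [/\ (forall i, (1 <= i <= nO D)%N -> vx V e i t = 0 \/ vx V e i t = 1),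
         sumO D (fun i => vx V e i t) = 1 &
         gam D 1 <= sumO D (fun i => gam D i * vx V e i t) <= gam D (nO D)])
  /\
  (forall l e, (1 <= l <= nL D)%N -> (1 <= e <= nE D)%N ->
     vrho V l e 0 = rho0 D l e)
  /\
  (forall l e t, (1 <= l <= nL D)%N -> (1 <= e <= nE D)%N -> (t < nT D)%N ->
   [/\
     vth V l e t ^+ 2 <= vnu V l e t * vrho V l e t,
     (forall i, (1 <= i <= nO D)%N ->
       [/\ 0 <= vz V l e i t <= etab D * vx V e i t,
           veta V l e t - etab D * (1 - vx V e i t) <= vz V l e i t <= veta V l e t,
           0 <= vy V l e i t <= rhob D e * vx V e i t &
           vrho V l e t - rhob D e * (1 - vx V e i t) <= vy V l e i t <= vrho V l e t]),
     (if e == 1%N then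
        vrho V l 1 t.+1 = vrho V l 1 t + hh D 1 * omg D l t
                          - hh D 1 * sumO D (fun i => gam D i * vy V l 1 i t)
      else
        vrho V l e t.+1 = vrho V l e t
           + hh D e * kappa D l e t * sumO D (fun i => gam D i * vy V l e.-1 i t)
           - hh D e * sumO D (fun i => gam D i * vy V l e i t)
        /\ kappa D l e t * sumO D (fun i => gam D i * vy V l e.-1 i t)
           <= Num.min (fb D e) (tau D e * ub D e * (rhob D e - vrho V l e t))),
     [/\ sumO D (fun i => gam D i * (rhob D e - fb D e / ub D e) * vz V l e i t)
           - vmu V l e t + fb D e * veta V l e t >= 0,
         vnu V l e t = vmu V l e t + (nT D)%:R^-1 * sumO D (fun i => gam D i * vx V e i t) &
         `|vnu V l e t| <= vlam V] &
     0 <= veta V l e t <= etab D]).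

(* A feasible point of (P4') keeps rho in [0, rhob] and every z in [0, etab]
   (a McCormick envelope of a binary x pins the product between these bounds),
   so the dual constraints bound nu from above by a constant depending on e only.
   The cone constraint then gives vartheta^2 <= nu * rho <= const. *)
From HB Require Import structures.
From mathcomp Require Import all_boot all_order all_algebra.
From mathcomp Require Import lra.
Set Implicit Arguments. Unset Strict Implicit. Unset Printing Implicit Defensive.
Import Order.TTheory GRing.Theory Num.Theory.
Local Open Scope ring_scope.

Section RealFacts.
Variable R : realFieldType.
Implicit Types b c v x y z K : R.

Lemma ler_sum_nat_term (F : nat -> R) (a n e : nat) :
  (forall i, 0 <= F i) -> (a <= e < n)%N -> F e <= \sum_(a <= i < n) F i.
Proof.
move=> F_ge0 ae_n.
rewrite (bigD1_seq e) ?mem_index_iota ?iota_uniq //= lerDl.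
exact: sumr_ge0.
Qed.

Lemma binary_mccormick_bounds b x y v :
  x = 0 \/ x = 1 -> 0 <= y <= b * x -> v - b * (1 - x) <= y <= v ->
  0 <= v <= b.
Proof. by case=> ->; rewrite ?mulr0 ?mulr1 ?subr0 ?subrr; lra. Qed.

Lemma binary_scale_le b x z : 0 <= b -> x = 0 \/ x = 1 -> z <= b * x -> z <= b.
Proof. by move=> b_ge0; case=> ->; rewrite ?mulr0 ?mulr1; lra. Qed.

Lemma ler_mul_norm_bound c z b : 0 <= z <= b -> c * z <= `|c| * b.
Proof.
case/andP=> z_ge0 z_le_b.
apply: le_trans (ler_norm _) _.
by rewrite normrM (ger0_norm z_ge0) ler_wpM2l.
Qed.

Lemma norm_le_of_sqr_le x K : x ^+ 2 <= K -> `|x| <= 1 + K.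
Proof.
move=> x2_le_K; have K_ge0 : 0 <= K := le_trans (sqr_ge0 x) x2_le_K.
have [x_le1 | x_gt1] := lerP `|x| 1; first lra.
suff : `|x| <= `|x| ^+ 2 by rewrite real_normK ?num_real; lra.
by rewrite expr2 ler_peMl //; lra.
Qed.

End RealFacts.

Definition vnu_bound (R : realFieldType) (D : P4data R) (e : nat) : R :=
  sumO D (fun i => `|gam D i * (rhob D e - fb D e / ub D e)| * etab D)
  + `|fb D e| * etab D + (nT D)%:R^-1 * `|gam D (nO D)|.

Section FeasiblePoint.
Variables (R : realFieldType) (D : P4data R) (V : P4vars R).
Hypotheses (feasV : feasible_P4 D V) (etab_ge0 : 0 <= etab D) (nO_gt0 : (0 < nO D)%N).
Variables l e t : nat.
Hypotheses (hl : (1 <= l <= nL D)%N) (he : (1 <= e <= nE D)%N) (ht : (t < nT D)%N).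

Let vx_binary i : (1 <= i <= nO D)%N -> vx V e i t = 0 \/ vx V e i t = 1.
Proof. by case: feasV => /(_ e t he ht) [x01 _ _] _; apply: x01. Qed.

Lemma vrho_bounds : 0 <= vrho V l e t <= rhob D e.
Proof.
have i1 : (1 <= 1 <= nO D)%N by rewrite leqnn.
case: feasV => _ [_ /(_ l e t hl he ht) [_ /(_ 1%N i1) [_ _ y_bds rho_bds] _ _ _]].
exact: binary_mccormick_bounds (vx_binary i1) y_bds rho_bds.
Qed.

Lemma vz_bounds i : (1 <= i <= nO D)%N -> 0 <= vz V l e i t <= etab D.
Proof.
move=> hi.
case: feasV => _ [_ /(_ l e t hl he ht) [_ /(_ i hi) [/andP [z_ge0 z_le] _ _ _] _ _ _]].
by rewrite z_ge0 (binary_scale_le etab_ge0 (vx_binary hi) z_le).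
Qed.

Lemma vnu_le_bound : vnu V l e t <= vnu_bound D e.
Proof.
case: feasV => /(_ e t he ht) [_ _ /andP [_ gx_le]].
case=> _ /(_ l e t hl he ht) [_ _ _ [mu_le -> _] /andP [eta_ge0 eta_le]].
have z_term : sumO D (fun i => gam D i * (rhob D e - fb D e / ub D e) * vz V l e i t)
    <= sumO D (fun i => `|gam D i * (rhob D e - fb D e / ub D e)| * etab D).
  apply: ler_sum_nat => i /andP [i_ge1 i_lt].
  by apply: ler_mul_norm_bound; apply: vz_bounds; rewrite i_ge1 -ltnS.
have eta_term : fb D e * veta V l e t <= `|fb D e| * etab D.
  by apply: ler_mul_norm_bound; rewrite eta_ge0.
have x_term : (nT D)%:R^-1 * sumO D (fun i => gam D i * vx V e i t)
    <= (nT D)%:R^-1 * `|gam D (nO D)|.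
  by rewrite ler_wpM2l ?invr_ge0 // (le_trans gx_le) ?ler_norm.
rewrite /vnu_bound; lra.
Qed.

Lemma vth_sqr_le : vth V l e t ^+ 2 <= `|vnu_bound D e| * `|rhob D e|.
Proof.
have /andP [rho_ge0 rho_le] := vrho_bounds.
case: feasV => _ [_ /(_ l e t hl he ht) [cone _ _ _ _]].
have nu_le : vnu V l e t <= `|vnu_bound D e| := le_trans vnu_le_bound (ler_norm _).
rewrite (ger0_norm (le_trans rho_ge0 rho_le)).
apply: (le_trans cone); apply: (le_trans (ler_wpM2r rho_ge0 nu_le)).
by rewrite ler_wpM2l.
Qed.

End FeasiblePoint.

Theorem lemma5 (R : realFieldType) (D : P4data R) :
  data_ok D ->
  exists thb : R,
    forall V : P4vars R, feasible_P4 D V ->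
    forall l e t, (1 <= l <= nL D)%N -> (1 <= e <= nE D)%N -> (t < nT D)%N ->
      `|vth V l e t| <= thb.
Proof.
move=> [[_ [_ [_ nO_gt0]]] [_ [_ [[etab_gt0 _] _]]]].
pose K := \sum_(1 <= e < (nE D).+1) `|vnu_bound D e| * `|rhob D e|.
exists (1 + K) => V feasV l e t hl he ht.
apply: norm_le_of_sqr_le.
apply: le_trans (vth_sqr_le feasV (ltW etab_gt0) nO_gt0 hl he ht) _.
apply: (ler_sum_nat_term (F := fun e => `|vnu_bound D e| * `|rhob D e|)) => //.
by move=> i; rewrite mulr_ge0.
Qed.
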